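(* Let $\varphi(z)=-1/\overline{z}$ and let $f:\mathbb{C}_\infty\to\mathbb{C}_\infty$ be a rational map of degree at least $2$ with $f\circ\varphi=\varphi\circ f$. If $\Omega$ is a forward invariant component of the Fatou set $F(f)$ (i.e. $f(\Omega)=\Omega$), then $W=\varphi(\Omega)$ is also a forward invariant component of $F(f)$, and $W$ is of the same type as $\Omega$ (attracting, super-attracting, parabolic, Siegel disk, or Herman ring).
   Context: The Fatou set $F(f)$ is the maximal open set on which $\{f^n\}$ is normal. A forward invariant Fatou component $\Omega$ is: an attracting component if it contains an attracting fixed point $\zeta$ ($0<|f'(\zeta)|<1$); a super-attracting component if it contains a fixed point with $f'(\zeta)=0$; a parabolic component if there is a fixed point $\zeta\in\partial\Omega$ with $f'(\zeta)$ a root of unity and $f^n\to\zeta$ on $\Omega$; a Siegel disk if $f|_\Omega$ is analytically conjugate to an irrational Euclidean rotation of the unit disk; a Herman ring if $f|_\Omega$ is analytically conjugate to an irrational Euclidean rotation of some round annulus. (Multipliers at $\infty$ are defined via conjugation by $1/z$.) Every forward invariant Fatou component of a rational map of degree $\ge2$ is of exactly one of these types. *)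

From HB Require Import structures.
From mathcomp Require Import all_boot all_order all_algebra.
From mathcomp Require Import complex.
From mathcomp Require Import reals trigo.
Set Implicit Arguments. Unset Strict Implicit. Unset Printing Implicit Defensive.
Import Order.TTheory GRing.Theory Num.Theory.
Local Open Scope ring_scope.
Local Open Scope complex_scope.

Section Dyn.
Variable R : realType.

(* The Riemann sphere: None is the point at infinity. *)
Definition sphere := option R[i].

Definition cnorm2 (z : R[i]) : R := let: a +i* b := z in a ^+ 2 + b ^+ 2.
Definition cnorm (z : R[i]) : R := Num.sqrt (cnorm2 z).

Definition chordal (a b : sphere) : R :=
  match a, b with
  | Some x, Some y =>
      2 * cnorm (x - y) / (Num.sqrt (1 + cnorm2 x) * Num.sqrt (1 + cnorm2 y))
  | Some x, None => 2 / Num.sqrt (1 + cnorm2 x)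
  | None, Some y => 2 / Num.sqrt (1 + cnorm2 y)
  | None, None => 0
  end.

Definition sopen (U : sphere -> Prop) :=
  forall x, U x -> exists e : R, 0 < e /\ forall y, chordal x y < e -> U y.

Definition sconnected (A : sphere -> Prop) :=
  forall U V : sphere -> Prop, sopen U -> sopen V ->
    (forall x, A x -> U x \/ V x) ->
    (exists x, A x /\ U x) -> (exists x, A x /\ V x) ->
    exists x, [/\ A x, U x & V x].

Definition locunif_cvg (U : sphere -> Prop) (g : nat -> sphere -> sphere)
    (h : sphere -> sphere) :=
  forall x, U x -> exists d : R, [/\ 0 < d, (forall y, chordal x y < d -> U y) &
    forall e : R, 0 < e -> exists N : nat, forall k, (N <= k)%N ->
      forall y, chordal x y < d -> chordal (g k y) (h y) < e].

Definition normal_iterates (f : sphere -> sphere) (U : sphere -> Prop) :=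
  forall m : nat -> nat, exists s : nat -> nat,
    (forall k, (s k < s k.+1)%N) /\
    exists h : sphere -> sphere, locunif_cvg U (fun k => iter (m (s k)) f) h.

Definition fatou (f : sphere -> sphere) (x : sphere) :=
  exists U, [/\ sopen U, U x & normal_iterates f U].

Definition fatou_component (f : sphere -> sphere) (O : sphere -> Prop) :=
  [/\ (exists x, O x), (forall x, O x -> fatou f x), sconnected O &
      forall B, sconnected B -> (forall x, O x -> B x) ->
        (forall x, B x -> fatou f x) -> forall x, B x -> O x].

Definition forward_invariant (f : sphere -> sphere) (O : sphere -> Prop) :=
  (forall x, O x -> O (f x)) /\ (forall y, O y -> exists x, O x /\ f x = y).

Definition rat_of_polys (p q : {poly R[i]}) (s : sphere) : sphere :=
  match s with
  | Some z => if q.[z] == 0 then None else Some (p.[z] / q.[z])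
  | None => if (size q < size p)%N then None
            else if size p == size q then Some (lead_coef p / lead_coef q)
            else Some 0
  end.

Definition rational_map (f : sphere -> sphere) (d : nat) :=
  exists p q : {poly R[i]}, [/\ q != 0, coprimep p q,
    d = (maxn (size p) (size q)).-1 & forall s, f s = rat_of_polys p q s].

Definition phi (s : sphere) : sphere :=
  match s with
  | Some z => if z == 0 then None else Some (- (z^*)^-1)
  | None => Some 0
  end.

(* the chart z |-> 1/z, used at infinity *)
Definition cinv (s : sphere) : sphere :=
  match s with
  | Some z => if z == 0 then None else Some z^-1
  | None => Some 0
  end.

Definition has_deriv (g : R[i] -> sphere) (a b l : R[i]) :=
  g a = Some b /\
  forall e : R, 0 < e -> exists d : R, 0 < d /\
    forall z, 0 < cnorm (z - a) < d ->
      exists w, g z = Some w /\ cnorm ((w - b) / (z - a) - l) < e.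

Definition multiplier (f : sphere -> sphere) (zeta : sphere) (l : R[i]) :=
  f zeta = zeta /\
  match zeta with
  | Some a => has_deriv (fun z => f (Some z)) a a l
  | None => has_deriv (fun z => cinv (f (cinv (Some z)))) 0 0 l
  end.

Definition cdiff (g : R[i] -> R[i]) (a : R[i]) :=
  exists l, forall e : R, 0 < e -> exists d : R, 0 < d /\
    forall z, 0 < cnorm (z - a) < d -> cnorm ((g z - g a) / (z - a) - l) < e.

Definition holo_on (h : sphere -> R[i]) (O : sphere -> Prop) :=
  forall s, O s ->
    match s with
    | Some a => cdiff (fun z => h (Some z)) a
    | None => cdiff (fun z => h (cinv (Some z))) 0
    end.

Definition rot (theta : R) : R[i] :=
  (cos (2 * pi * theta)) +i* (sin (2 * pi * theta)).

Definition conj_irr_rotation (f : sphere -> sphere) (O : sphere -> Prop)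
    (D : R[i] -> Prop) :=
  exists (h : sphere -> R[i]) (theta : R),
    [/\ (forall r : rat, theta != ratr r),
        holo_on h O,
        (forall s, O s -> D (h s)),
        (forall s t, O s -> O t -> h s = h t -> s = t) /\
          (forall w, D w -> exists s, O s /\ h s = w) &
        (forall s, O s -> h (f s) = rot theta * h s)].

Definition attracting_comp f (O : sphere -> Prop) :=
  exists zeta l, [/\ O zeta, multiplier f zeta l & 0 < cnorm l < 1].

Definition superattracting_comp f (O : sphere -> Prop) :=
  exists zeta, O zeta /\ multiplier f zeta 0.

Definition parabolic_comp f (O : sphere -> Prop) :=
  exists zeta l (n : nat),
    [/\ ~ O zeta /\ (forall e : R, 0 < e -> exists s, O s /\ chordal zeta s < e),
        multiplier f zeta l, (0 < n)%N /\ l ^+ n = 1 &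
        forall s, O s -> forall e : R, 0 < e -> exists N : nat,
          forall k, (N <= k)%N -> chordal (iter k f s) zeta < e].

Definition siegel_disk f (O : sphere -> Prop) :=
  conj_irr_rotation f O (fun w => cnorm w < 1).

Definition herman_ring f (O : sphere -> Prop) :=
  exists r1 r2 : R, 0 < r1 < r2 /\
    conj_irr_rotation f O (fun w => r1 < cnorm w < r2).

Definition same_type f (O W : sphere -> Prop) :=
  [/\ attracting_comp f O <-> attracting_comp f W,
      superattracting_comp f O <-> superattracting_comp f W,
      parabolic_comp f O <-> parabolic_comp f W,
      siegel_disk f O <-> siegel_disk f W &
      herman_ring f O <-> herman_ring f W].

End Dyn.

From Pilot Require Import Defs.
From HB Require Import structures.
From mathcomp Require Import all_boot all_order all_algebra.
From mathcomp Require Import complex.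
From mathcomp Require Import reals trigo.
From mathcomp Require Import boolp ring lra.
Set Implicit Arguments. Unset Strict Implicit. Unset Printing Implicit Defensive.
Import Order.TTheory GRing.Theory Num.Theory.
Local Open Scope ring_scope.

(* The map phi(z) = -1/conj z is the inversion z |-> 1/z composed with the
   reflection z |-> -conj z.  Both are isometries of the chordal metric, so phi
   is an isometric involution of the sphere commuting with f; it therefore
   permutes the Fatou components and preserves forward invariance.  In the
   charts used to define multipliers and holomorphy, conjugating by the
   inversion is holomorphic and conjugating by the reflection conjugates
   derivatives.  Hence a fixed point with multiplier l is sent to one with
   multiplier conj l (same modulus, and a root of unity iff l is), and a
   linearisation h of f on Omega onto a rotation by theta yields the
   linearisation conj (h o phi) on phi(Omega) onto a rotation by -theta. *)

(* Keep [simpl] from exposing the case splits on [z == 0]. *)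
#[local] Arguments cinv {R} s : simpl never.
#[local] Arguments phi {R} s : simpl never.
#[local] Arguments chordal : simpl never.

Section ComplexNorm.
Variable R : realType.
Implicit Types x y : R[i].

Lemma cnormE x : cnorm x = Normc.normc x.
Proof. by case: x. Qed.

Lemma cnorm_ge0 x : 0 <= cnorm x.
Proof. exact: sqrtr_ge0. Qed.

Lemma cnorm_eq0 x : (cnorm x == 0) = (x == 0).
Proof.
apply/eqP/eqP => [|->]; last by rewrite cnormE Normc.normc0.
by rewrite cnormE => /Normc.eq0_normc.
Qed.

Lemma cnorm_gt0 x : x != 0 -> 0 < cnorm x.
Proof. by move=> x0; rewrite lt_def cnorm_eq0 x0 cnorm_ge0. Qed.

Lemma cnorm0 : cnorm (0 : R[i]) = 0.
Proof. by apply/eqP; rewrite cnorm_eq0. Qed.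

Lemma cnormM x y : cnorm (x * y) = cnorm x * cnorm y.
Proof. by rewrite !cnormE Normc.normcM. Qed.

Lemma cnormV x : cnorm x^-1 = (cnorm x)^-1.
Proof. by rewrite !cnormE Normc.normcV. Qed.

Lemma cnormD x y : cnorm (x + y) <= cnorm x + cnorm y.
Proof. by rewrite !cnormE le_normcD. Qed.

Lemma cnormN x : cnorm (- x) = cnorm x.
Proof. by rewrite !cnormE normcN. Qed.

Lemma cnormB x y : cnorm (x - y) = cnorm (y - x).
Proof. by rewrite -cnormN opprB. Qed.

Lemma cnormJ x : cnorm x^* = cnorm x.
Proof. by case: x => a b; rewrite /cnorm /cnorm2 /= sqrrN. Qed.

Lemma cnorm2E x : cnorm2 x = cnorm x ^+ 2.
Proof. by rewrite /cnorm sqr_sqrtr //; case: x => a b; rewrite addr_ge0 ?sqr_ge0. Qed.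

Lemma cnorm_subr_gt0 x y : (0 < cnorm (x - y)) = (x != y).
Proof. by rewrite lt_def cnorm_ge0 andbT cnorm_eq0 subr_eq0. Qed.

End ComplexNorm.

Section SphereSymmetries.
Variable R : realType.
Implicit Types (x y : R[i]) (s t : sphere R).

Definition nconj x := - x^*.

Lemma nconjK : involutive nconj.
Proof. by move=> x; rewrite /nconj rmorphN /= conjCK opprK. Qed.

Lemma nconj0 : nconj 0 = 0.
Proof. by rewrite /nconj rmorph0 oppr0. Qed.

Lemma nconj_eq0 x : (nconj x == 0) = (x == 0).
Proof. by rewrite oppr_eq0 conjC_eq0. Qed.

Lemma nconjV x : nconj x^-1 = (nconj x)^-1.
Proof. by rewrite /nconj fmorphV invrN. Qed.

Lemma nconjB x y : nconj x - nconj y = nconj (x - y).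
Proof. by rewrite /nconj rmorphB /=; ring. Qed.

Lemma nconj_div x y : nconj x / nconj y = (x / y)^*.
Proof. by rewrite /nconj invrN mulrNN rmorphM /= fmorphV. Qed.

Lemma cnorm_nconj x : cnorm (nconj x) = cnorm x.
Proof. by rewrite cnormN cnormJ. Qed.

Lemma omap_nconjK : involutive (omap nconj).
Proof. by case=> [x|] //=; rewrite nconjK. Qed.

Lemma cinv0 : cinv (Some 0) = None :> sphere R.
Proof. by rewrite /cinv eqxx. Qed.

Lemma cinvS x : x != 0 -> cinv (Some x) = Some x^-1.
Proof. by move=> x0; rewrite /cinv (negbTE x0). Qed.

Lemma cinvN : cinv None = Some 0 :> sphere R.
Proof. by []. Qed.

Lemma cinvK : involutive (@cinv R).
Proof.
case=> [x|]; last exact: cinv0.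
have [->|x0] := eqVneq x 0; first by rewrite cinv0.
by rewrite !cinvS ?invrK ?invr_eq0.
Qed.

Lemma cinv_nconj s : cinv (omap nconj s) = omap nconj (cinv s).
Proof.
case: s => [x|]; last by rewrite /= nconj0.
have [->|x0] := eqVneq x 0; first by rewrite /= nconj0 cinv0.
by rewrite /= !cinvS ?nconj_eq0 //= nconjV.
Qed.

Lemma phiE s : phi s = cinv (omap nconj s).
Proof.
case: s => [x|] //; have [->|x0] := eqVneq x 0; first by rewrite /= nconj0 cinv0 /phi eqxx.
by rewrite cinvS ?nconj_eq0 // /phi (negbTE x0) /nconj invrN.
Qed.

Lemma phiK : involutive (@phi R).
Proof. by move=> s; rewrite !phiE cinv_nconj cinvK omap_nconjK. Qed.

Definition hnorm x : R := Num.sqrt (1 + cnorm x ^+ 2).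

Lemma hnorm_gt0 x : 0 < hnorm x.
Proof. by rewrite sqrtr_gt0 ltr_pwDl // sqr_ge0. Qed.

Lemma hnorm0 : hnorm 0 = 1.
Proof. by rewrite /hnorm cnorm0 expr0n addr0 sqrtr1. Qed.

Lemma hnormV x : x != 0 -> hnorm x^-1 = hnorm x / cnorm x.
Proof.
move=> x0; have cx := cnorm_gt0 x0; rewrite /hnorm.
have -> : 1 + cnorm x^-1 ^+ 2 = (1 + cnorm x ^+ 2) * (cnorm x)^-1 ^+ 2.
  by rewrite cnormV; field; rewrite gt_eqF.
by rewrite sqrtrM ?addr_ge0 ?sqr_ge0 // sqrtr_sqr ger0_norm // invr_ge0 ltW.
Qed.

Lemma chordalSS x y :
  chordal (Some x) (Some y) = 2 * cnorm (x - y) / (hnorm x * hnorm y).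
Proof. by rewrite /chordal /hnorm !cnorm2E. Qed.

Lemma chordalSN x : chordal (Some x) None = 2 / hnorm x.
Proof. by rewrite /chordal /hnorm !cnorm2E. Qed.

Lemma chordalNS x : chordal None (Some x) = 2 / hnorm x.
Proof. by rewrite /chordal /hnorm !cnorm2E. Qed.

Lemma chordalC s t : chordal s t = chordal t s.
Proof.
case: s t => [x|] [y|] //; rewrite ?chordalSS ?chordalSN ?chordalNS //.
by rewrite cnormB [hnorm x * _]mulrC.
Qed.

Lemma chordal_nconj s t : chordal (omap nconj s) (omap nconj t) = chordal s t.
Proof.
have hn x : hnorm (nconj x) = hnorm x by rewrite /hnorm cnorm_nconj.
case: s t => [x|] [y|] //=; rewrite ?chordalSS ?chordalSN ?chordalNS ?hn //.
by rewrite nconjB cnorm_nconj.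
Qed.

Lemma chordal_cinvS x t : chordal (cinv (Some x)) (cinv t) = chordal (Some x) t.
Proof.
have [hx hy] := (hnorm_gt0 x, hnorm_gt0 (if t is Some y then y else 0)).
case: t hy => [y|] hy; [have [->|y0] := eqVneq y 0|]; have [->|x0] := eqVneq x 0;
  rewrite ?cinv0 ?cinvS // ?cinvN ?chordalSS ?chordalSN ?chordalNS ?hnorm0 ?hnormV //.
- by rewrite subrr cnorm0 !mulr0 mul0r.
- by rewrite subr0; field; rewrite !gt_eqF ?cnorm_gt0.
- by rewrite sub0r cnormN; field; rewrite !gt_eqF ?cnorm_gt0.
- have -> : x^-1 - y^-1 = (y - x) * (x^-1 * y^-1) by field; rewrite x0 y0.
  rewrite !cnormM !cnormV cnormB; field.
  by rewrite !gt_eqF ?cnorm_gt0.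
- by rewrite subr0 cnormV; field; rewrite !gt_eqF ?cnorm_gt0.
Qed.

Lemma chordal_cinv s t : chordal (cinv s) (cinv t) = chordal s t.
Proof.
case: s => [x|]; first exact: chordal_cinvS.
case: t => [y|]; first by rewrite [LHS]chordalC chordal_cinvS chordalC.
by rewrite cinvN chordalSS subrr cnorm0 !mulr0 mul0r.
Qed.

Lemma chordal_phi s t : chordal (phi s) (phi t) = chordal s t.
Proof. by rewrite !phiE chordal_cinv chordal_nconj. Qed.

End SphereSymmetries.

Arguments nconj {R} x.

Section IsometricSymmetry.
Variable R : realType.
Variables (psi f : sphere R -> sphere R).
Hypothesis psiK : involutive psi.
Hypothesis chordal_psi : forall s t, chordal (psi s) (psi t) = chordal s t.
Hypothesis f_psi : forall s, f (psi s) = psi (f s).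

Lemma iter_psi n s : iter n f (psi s) = psi (iter n f s).
Proof. by elim: n => //= n ->; rewrite f_psi. Qed.

Lemma sopen_comp (U : sphere R -> Prop) : sopen U -> sopen (U \o psi).
Proof.
move=> oU x Ux; have [e [e0 He]] := oU _ Ux.
by exists e; split=> // y xy; apply: He; rewrite chordal_psi.
Qed.

Lemma sconnected_comp (A : sphere R -> Prop) : sconnected A -> sconnected (A \o psi).
Proof.
move=> cA U V oU oV cov [x [Ax Ux]] [y [Ay Vy]].
suff [t [At Ut Vt]] : exists t, [/\ A t, (U \o psi) t & (V \o psi) t].
  by exists (psi t); rewrite /= psiK.
apply: cA (sopen_comp oU) (sopen_comp oV) _ _ _.
- by move=> t At; apply: cov; rewrite /= psiK.
- by exists (psi x); rewrite /= psiK.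
- by exists (psi y); rewrite /= psiK.
Qed.

Lemma fatou_comp x : fatou f x -> fatou f (psi x).
Proof.
move=> [U [oU Ux nU]]; exists (U \o psi); split; [exact: sopen_comp | by rewrite /= psiK|].
move=> m; have [s [s_incr [h cvg_h]]] := nU m; exists s; split=> //.
exists (psi \o h \o psi) => x0 Ux0; have [d [d0 Ud cvg]] := cvg_h _ Ux0.
exists d; split=> // [y xy|e e0]; first by apply: Ud; rewrite chordal_psi.
have [N HN] := cvg e e0; exists N => k Nk y xy.
by rewrite -[iter _ f y]psiK -iter_psi chordal_psi; apply: HN; rewrite ?chordal_psi.
Qed.

Lemma fatou_component_comp (O : sphere R -> Prop) :
  fatou_component f O -> fatou_component f (O \o psi).
Proof.
have fatou_preimage (B : sphere R -> Prop) :
    (forall x, B x -> fatou f x) -> forall x, (B \o psi) x -> fatou f x.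
  by move=> Bf x Bx; rewrite -[x]psiK; apply/fatou_comp/Bf.
move=> [[x Ox] Of cO maxO]; split.
- by exists (psi x); rewrite /= psiK.
- exact: fatou_preimage.
- exact: sconnected_comp.
move=> B cB OB Bf y By; apply: (maxO (B \o psi)); rewrite /= ?psiK //.
- exact: sconnected_comp.
- by move=> t Ot; apply: OB; rewrite /= psiK.
- exact: fatou_preimage.
Qed.

Lemma forward_invariant_comp (O : sphere R -> Prop) :
  forward_invariant f O -> forward_invariant f (O \o psi).
Proof.
move=> [fO surjO]; split=> [x Ox|y Oy]; first by rewrite /= -f_psi; apply: fO.
have [x [Ox fx]] := surjO _ Oy.
by exists (psi x); rewrite /= psiK f_psi fx psiK.
Qed.

End IsometricSymmetry.

Lemma iff_comp_involutive (T : Type) (psi : T -> T) (P : (T -> Prop) -> Prop)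
    (O : T -> Prop) :
  involutive psi -> (forall O, P O -> P (O \o psi)) -> P O <-> P (O \o psi).
Proof.
move=> psiK PO; split=> [|/PO]; first exact: PO.
suff -> : O \o psi \o psi = O by [].
by apply/funext => s /=; rewrite psiK.
Qed.

Section ComplexDerivative.
Variable R : realType.
Implicit Types (a b l u z : R[i]) (F G : R[i] -> R[i]).

Definition cnear a (P : R[i] -> Prop) :=
  exists2 d : R, 0 < d & forall z, cnorm (z - a) < d -> P z.

Lemma cnear_and a P Q : cnear a P -> cnear a Q -> cnear a (fun z => P z /\ Q z).
Proof.
move=> [d d0 HP] [d' d'0 HQ]; exists (Num.min d d'); first by rewrite lt_min d0 d'0.
by move=> z; rewrite lt_min => /andP[zd zd']; split; [apply: HP | apply: HQ].
Qed.

Lemma cnear_neq0 a : a != 0 -> cnear a (fun z => z != 0).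
Proof.
move=> a0; exists (cnorm a); first exact: cnorm_gt0.
by move=> z; apply: contraTneq => ->; rewrite sub0r cnormN ltxx.
Qed.

(* The complex derivative in Frechet form: unlike the difference quotients of
   [cdiff] and [has_deriv], it is stable under composition. *)
Definition is_cderiv F a l :=
  forall e : R, 0 < e ->
    cnear a (fun z => cnorm (F z - F a - l * (z - a)) <= e * cnorm (z - a)).

Lemma is_cderiv_lipschitz F a l : is_cderiv F a l ->
  exists2 K : R, 0 < K & cnear a (fun z => cnorm (F z - F a) <= K * cnorm (z - a)).
Proof.
move=> dF; have [d d0 Hd] := dF 1 ltr01.
exists (1 + cnorm l); first by rewrite ltr_pwDl ?cnorm_ge0.
exists d => // z /Hd; rewrite mul1r => bound.
have := cnormD (F z - F a - l * (z - a)) (l * (z - a)); rewrite subrK cnormM.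
by have := cnorm_ge0 l; have := cnorm_ge0 (z - a); nra.
Qed.

Lemma is_cderiv_cnear F a l P : is_cderiv F a l -> cnear (F a) P -> cnear a (P \o F).
Proof.
move=> dF [e e0 HP]; have [K K0 [d d0 HK]] := is_cderiv_lipschitz dF.
exists (Num.min d (e / K)); first by rewrite lt_min d0 divr_gt0.
move=> z; rewrite lt_min => /andP[zd zeK]; apply: HP.
by apply: le_lt_trans (HK _ zd) _; rewrite mulrC -ltr_pdivlMr.
Qed.

Lemma is_cderiv_eq_near F G a l :
  is_cderiv F a l -> cnear a (fun z => G z = F z) -> is_cderiv G a l.
Proof.
move=> dF GF e e0.
have Ga : G a = F a by case: GF => d d0; apply; rewrite subrr cnorm0.
by have [d d0 H] := cnear_and GF (dF e e0); exists d => // z /H [-> ?]; rewrite Ga.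
Qed.

Lemma is_cderiv_comp F G a l k :
  is_cderiv F a l -> is_cderiv G (F a) k -> is_cderiv (G \o F) a (k * l).
Proof.
move=> dF dG e e0; have [K K0 lipF] := is_cderiv_lipschitz dF.
have k0 := cnorm_ge0 k.
have e1_gt0 : 0 < e / (2 * K) by rewrite divr_gt0 ?mulr_gt0.
have e2_gt0 : 0 < e / (2 * (cnorm k + 1)) by rewrite divr_gt0 ?mulr_gt0 ?ltr_wpDl.
have e1K : e / (2 * K) * K = e / 2 by field; rewrite gt_eqF.
have e2k : cnorm k * (e / (2 * (cnorm k + 1))) <= e / 2.
  rewrite -subr_ge0 (_ : _ - _ = e / (2 * (cnorm k + 1))) ?ltW //.
  by field; rewrite gt_eqF ?ltr_wpDl.
have [d d0 H] := cnear_and lipF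
  (cnear_and (is_cderiv_cnear dF (dG _ e1_gt0)) (dF _ e2_gt0)).
exists d => // z /H /= [lipz [Gz Fz]].
rewrite (_ : G (F z) - G (F a) - k * l * (z - a) =
  (G (F z) - G (F a) - k * (F z - F a)) + k * (F z - F a - l * (z - a))); last by ring.
apply: le_trans (cnormD _ _) _; rewrite cnormM.
have Q0 := cnorm_ge0 (z - a).
set P := cnorm (F z - F a) in lipz Gz; set Q := cnorm (z - a) in lipz Gz Fz Q0 *.
set X := cnorm (G (F z) - _ - _) in Gz *; set Y := cnorm (F z - _ - _) in Fz *.
have bX : X <= e / 2 * Q by rewrite -e1K; nra.
have bY : cnorm k * Y <= e / 2 * Q by nra.
lra.
Qed.

Lemma is_cderivV a : a != 0 -> is_cderiv GRing.inv a (- (a ^+ 2)^-1).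
Proof.
move=> a0 e e0; set A := cnorm a; have A0 : 0 < A := cnorm_gt0 a0.
exists (Num.min (A / 2) (e * A ^+ 3 / 2)).
  by rewrite lt_min !divr_gt0 ?mulr_gt0 ?exprn_gt0.
move=> z; rewrite lt_min => /andP[za_small za_e]; set Q := cnorm (z - a) in za_small za_e *.
have zA : A / 2 <= cnorm z.
  by have := cnormD z (a - z); rewrite addrC subrK -/A cnormB -/Q; lra.
have z0 : z != 0 by rewrite -cnorm_eq0 gt_eqF // (lt_le_trans _ zA) ?divr_gt0.
have iz : (cnorm z)^-1 <= 2 / A.
  by rewrite -invf_div lef_pV2 ?posrE ?divr_gt0 ?cnorm_gt0.
rewrite (_ : _ - _ - _ = (z - a) * (z - a) * (z^-1 * (a ^+ 2)^-1)); last first.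
  by field; rewrite a0 z0.
rewrite !cnormM !cnormV expr2 cnormM -/Q -/A -mulrA [e * Q]mulrC.
apply: ler_wpM2l; first exact: cnorm_ge0.
rewrite -[X in _ <= X](_ : e * A ^+ 3 / 2 * (2 / A * (A * A)^-1) = e); last first.
  by field; rewrite gt_eqF.
have AA : 0 <= (A * A)^-1 by rewrite invr_ge0 mulr_ge0 ?ltW.
apply: ler_pM; rewrite ?cnorm_ge0 ?(ltW za_e) ?ler_wpM2r //.
by rewrite mulr_ge0 // invr_ge0 cnorm_ge0.
Qed.

Lemma is_cderiv_nconj F a l :
  is_cderiv F a l -> is_cderiv (fun z => (F (nconj z))^*) (nconj a) (- l^*).
Proof.
move=> dF e e0; have [d d0 H] := dF e e0; exists d => // z.
have Ez : nconj z - a = nconj (z - nconj a) by rewrite -nconjB nconjK.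
rewrite -(cnorm_nconj (z - _)) -Ez => /H; rewrite nconjK.
suff -> : (F (nconj z))^* - (F a)^* - - l^* * (z - nconj a) =
          (F (nconj z) - F a - l * (nconj z - a))^* by rewrite cnormJ.
by rewrite /nconj !rmorphB /= rmorphM /= rmorphB /= rmorphN /= conjCK; ring.
Qed.

Lemma le_cnorm_quotient u l z a (e : R) : z != a ->
  (cnorm (u - l * (z - a)) <= e * cnorm (z - a)) = (cnorm (u / (z - a) - l) <= e).
Proof.
move=> za; rewrite -[RHS](ler_pM2r (_ : 0 < cnorm (z - a))) ?cnorm_subr_gt0 // -cnormM; congr (cnorm _ <= _).
by field; rewrite subr_eq0.
Qed.

Lemma cdiffP G a : cdiff G a <-> exists l, is_cderiv G a l.
Proof.
split=> [[l dG]|[l dG]]; exists l => e e0.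
  have [d [d0 H]] := dG e e0; exists d => // z za.
  have [->|za'] := eqVneq z a; first by rewrite !subrr mulr0 subrr cnorm0 mulr0.
  by rewrite le_cnorm_quotient //; apply/ltW/H; rewrite za andbT cnorm_subr_gt0.
have [d d0 H] := dG (e / 2) (divr_gt0 e0 (ltr0Sn _ 1)).
exists d; split=> // z /andP[za /H]; rewrite le_cnorm_quotient -?cnorm_subr_gt0 //.
by move/le_lt_trans; apply; rewrite gtr_pMr ?invf_lt1 ?ltr1n.
Qed.

Lemma has_derivP (g : R[i] -> sphere R) a b l : has_deriv g a b l <->
  [/\ g a = Some b, cnear a (fun z => g z != None) &
      is_cderiv (fun z => odflt 0 (g z)) a l].
Proof.
split=> [[ga dg]|[ga gfin dg]].
  split=> //.
    have [d [d0 H]] := dg 1 ltr01; exists d => // z za.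
    have [->|za'] := eqVneq z a; first by rewrite ga.
    by have [|w [-> _]] := H z; rewrite ?za ?andbT ?cnorm_subr_gt0.
  move=> e e0; have [d [d0 H]] := dg e e0; exists d => // z za.
  have [->|za'] := eqVneq z a; first by rewrite !subrr mulr0 subrr cnorm0 mulr0.
  have [|w [gz bound]] := H z; first by rewrite za andbT cnorm_subr_gt0.
  by rewrite gz ga /= le_cnorm_quotient // ltW.
split=> // e e0.
have [d d_gt0 H] := cnear_and gfin (dg (e / 2) (divr_gt0 e0 (ltr0Sn _ 1))).
exists d; split=> // z /andP[za /H]; case: (g z) => [w [_]|[]] //.
rewrite ga /= le_cnorm_quotient -?cnorm_subr_gt0 // => /le_lt_trans bound.
by exists w; split=> //; apply: bound; rewrite gtr_pMr ?invf_lt1 ?ltr1n.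
Qed.

End ComplexDerivative.

Section Multipliers.
Variable R : realType.
Implicit Types (a b l : R[i]) (s t zeta : sphere R) (g : sphere R -> sphere R).

Lemma has_deriv_nconj (G : R[i] -> sphere R) a b l : has_deriv G a b l ->
  has_deriv (fun z => omap nconj (G (nconj z))) (nconj a) (nconj b) l^*.
Proof.
move=> [Ga dG]; split; first by rewrite nconjK Ga.
move=> e e0; have [d [d0 H]] := dG e e0; exists d; split=> // z za.
have Ez : z - nconj a = nconj (nconj z - a) by rewrite -nconjB nconjK.
have [|w [Gz bound]] := H (nconj z); first by rewrite -cnorm_nconj -Ez.
exists (nconj w); split; first by rewrite Gz.
by rewrite Ez nconjB nconj_div -(cnormJ (_ - _)) rmorphB /= !conjCK.
Qed.

Lemma has_deriv_cinv g a b l : a != 0 -> b != 0 ->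
  has_deriv (fun z => g (Some z)) a b l ->
  has_deriv (fun z => cinv (g (cinv (Some z)))) a^-1 b^-1 (l * (a / b) ^+ 2).
Proof.
move=> a0 b0 /has_derivP[ga gfin dF].
set F := fun z => odflt 0 (g (Some z)) in dF.
have ia0 : a^-1 != 0 by rewrite invr_eq0.
have Fb : F a^-1^-1 = b by rewrite invrK /F ga.
have dinv := is_cderivV ia0.
have dFinv := is_cderiv_comp dinv (_ : is_cderiv F a^-1^-1 l); rewrite invrK in dFinv.
have Fb0 : (F \o GRing.inv) a^-1 != 0 by rewrite /= Fb.
have := is_cderiv_comp (dFinv dF) (is_cderivV Fb0); rewrite /= Fb.
rewrite (_ : _ * _ = l * (a / b) ^+ 2); last by field; rewrite a0 b0.
move=> dK; have near_eq : cnear a^-1 (fun z =>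
    cinv (g (cinv (Some z))) = Some ((GRing.inv \o (F \o GRing.inv)) z)).
  have gfin' : cnear a^-1^-1 (fun z => g (Some z) != None) by rewrite invrK.
  have [d d0 H] := cnear_and (cnear_neq0 ia0) (cnear_and
    (is_cderiv_cnear dinv gfin') (is_cderiv_cnear (dFinv dF) (cnear_neq0 Fb0))).
  exists d => // z /H /= [z0 [gz Fz0]].
  by move: gz Fz0; rewrite cinvS // /F; case: (g _) => //= w _ w0; rewrite cinvS.
apply/has_derivP; split.
- by rewrite cinvS // invrK ga cinvS.
- by case: near_eq => d d0 H; exists d => // z /H ->.
- by apply: is_cderiv_eq_near dK _; case: near_eq => d d0 H; exists d => // z /H ->.
Qed.

Lemma multiplier_nconj g zeta l : multiplier g zeta l ->
  multiplier (fun s => omap nconj (g (omap nconj s))) (omap nconj zeta) l^*.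
Proof.
case: zeta => [a|] [gz dg]; split; rewrite /= ?nconjK ?gz //.
  exact: has_deriv_nconj dg.
have := has_deriv_nconj dg; rewrite nconj0.
suff -> : (fun z => cinv (omap nconj (g (omap nconj (cinv (Some z)))))) =
          (fun z => omap nconj (cinv (g (cinv (Some (nconj z)))))) by [].
by apply/funext => z; rewrite cinv_nconj (cinv_nconj (Some z)).
Qed.

Lemma multiplier_cinv g zeta l : multiplier g zeta l ->
  multiplier (fun s => cinv (g (cinv s))) (cinv zeta) l.
Proof.
case: zeta => [a|] [gz dg]; last by split; rewrite ?cinvK ?gz.
have [a0|a0] := eqVneq a 0.
  subst a; rewrite cinv0; split; first by rewrite cinvN gz cinv0.
  suff -> : (fun z => cinv (cinv (g (cinv (cinv (Some z)))))) = fun z => g (Some z).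
    by [].
  by apply/funext => z; rewrite !cinvK.
rewrite cinvS //; split; first by rewrite -cinvS // cinvK gz cinvS.
by have := has_deriv_cinv a0 a0 dg; rewrite divff // expr1n mulr1.
Qed.

Lemma multiplier_phi f zeta l : (forall s, f (phi s) = phi (f s)) ->
  multiplier f zeta l -> multiplier f (phi zeta) l^*.
Proof.
move=> f_phi /multiplier_nconj/multiplier_cinv; rewrite -phiE.
suff -> : (fun s => cinv (omap nconj (f (omap nconj (cinv s))))) = f by [].
by apply/funext => s; rewrite -cinv_nconj -!phiE -f_phi phiK.
Qed.

End Multipliers.

Section HolomorphicCharts.
Variable R : realType.
Implicit Types (h : sphere R -> R[i]) (s : sphere R).

(* [holo_on h O] unfolds to [forall s, O s -> holo_at h s]. *)
Definition holo_at h s :=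
  match s with
  | Some a => cdiff (fun z => h (Some z)) a
  | None => cdiff (fun z => h (cinv (Some z))) 0
  end.

Lemma holo_at_nconj h s :
  holo_at h s -> holo_at (fun t => (h (omap nconj t))^*) (omap nconj s).
Proof.
case: s => [a|] /cdiffP[l dh]; apply/cdiffP; exists (- l^*).
  exact: is_cderiv_nconj dh.
have := is_cderiv_nconj dh; rewrite nconj0.
suff -> : (fun z => (h (omap nconj (cinv (Some z))))^*) =
          (fun z => (h (cinv (Some (nconj z))))^*) by [].
by apply/funext => z; rewrite (cinv_nconj (Some z)).
Qed.

Lemma holo_at_cinv h s : holo_at h s -> holo_at (h \o cinv) (cinv s).
Proof.
case: s => [a|] //; have [->|a0] := eqVneq a 0.
  rewrite cinv0 /=; suff -> : (fun z => h (cinv (cinv (Some z)))) = fun z => h (Some z).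
    by [].
  by apply/funext => z; rewrite cinvK.
move=> /cdiffP[l dh]; rewrite cinvS //; apply/cdiffP.
have ia0 : a^-1 != 0 by rewrite invr_eq0.
have dh' : is_cderiv (fun z => h (Some z)) a^-1^-1 l by rewrite invrK.
eexists; apply: is_cderiv_eq_near (is_cderiv_comp (is_cderivV ia0) dh') _.
by have [d d0 H] := cnear_neq0 ia0; exists d => // z /H z0; rewrite /= cinvS.
Qed.

Lemma holo_on_phi h O :
  holo_on h O -> holo_on (fun s => (h (phi s))^*) (O \o phi).
Proof.
move=> hol s Os; have := holo_at_nconj (holo_at_cinv (hol _ Os)).
rewrite phiE cinvK omap_nconjK.
suff -> : (fun t => ((h \o cinv) (omap nconj t))^*) = fun t => (h (phi t))^* by [].
by apply/funext => t; rewrite phiE.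
Qed.

End HolomorphicCharts.

Section ComponentTypes.
Variable R : realType.
Variable f : sphere R -> sphere R.
Hypothesis f_phi : forall s, f (phi s) = phi (f s).
Implicit Type O : sphere R -> Prop.

Lemma attracting_comp_phi O : attracting_comp f O -> attracting_comp f (O \o phi).
Proof.
move=> [zeta [l [Oz m ll]]]; exists (phi zeta), l^*.
by split; [rewrite /= phiK | exact: multiplier_phi | rewrite cnormJ].
Qed.

Lemma superattracting_comp_phi O :
  superattracting_comp f O -> superattracting_comp f (O \o phi).
Proof.
move=> [zeta [Oz m]]; exists (phi zeta); split; first by rewrite /= phiK.
by have := multiplier_phi f_phi m; rewrite conjC0.
Qed.

Lemma parabolic_comp_phi O : parabolic_comp f O -> parabolic_comp f (O \o phi).
Proof.
move=> [zeta [l [n [[Oz close] m [n0 ln] conv]]]].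
exists (phi zeta), l^*, n; split.
- split=> [|e e0]; first by rewrite /= phiK.
  by have [s [Os cs]] := close e e0; exists (phi s); rewrite /= phiK chordal_phi.
- exact: multiplier_phi.
- by rewrite -rmorphXn ln rmorph1.
- move=> s Os e e0; have [N HN] := conv _ Os e e0; exists N => k kN.
  by rewrite -[s]phiK (iter_psi f_phi) chordal_phi; apply: HN.
Qed.

Lemma rotN (theta : R) : Defs.rot (- theta) = (Defs.rot theta)^*.
Proof. by rewrite /Defs.rot mulrN cosN sinN. Qed.

Lemma conj_irr_rotation_phi O (D : R[i] -> Prop) : (forall w, D w -> D w^*) ->
  conj_irr_rotation f O D -> conj_irr_rotation f (O \o phi) D.
Proof.
move=> DJ [h [theta [irr holo HD [inj surj] rotE]]].
exists (fun s => (h (phi s))^*), (- theta); split.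
- by move=> r; rewrite -[ratr r]opprK eqr_opp -rmorphN; apply: irr.
- exact: holo_on_phi.
- by move=> s Os; apply/DJ/HD.
- split=> [s t Os Ot /(congr1 (fun x => x^*))|w Dw].
    by rewrite !conjCK => /(inj _ _ Os Ot) st; rewrite -[s]phiK st phiK.
  have [s [Os hs]] := surj _ (DJ _ Dw).
  by exists (phi s); rewrite /= phiK hs conjCK.
- by move=> s Os; rewrite /= -f_phi rotE // rmorphM rotN.
Qed.

Lemma siegel_disk_phi O : siegel_disk f O -> siegel_disk f (O \o phi).
Proof. by apply: conj_irr_rotation_phi => w; rewrite cnormJ. Qed.

Lemma herman_ring_phi O : herman_ring f O -> herman_ring f (O \o phi).
Proof.
move=> [r1 [r2 [r12 rotO]]]; exists r1, r2; split=> //.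
by apply: conj_irr_rotation_phi rotO => w; rewrite cnormJ.
Qed.

End ComponentTypes.

Theorem mainTheorem2 (R : realType) (f : sphere R -> sphere R) (d : nat)
    (Omega : sphere R -> Prop) :
  (2 <= d)%N -> rational_map f d ->
  (forall s, f (phi s) = phi (f s)) ->
  fatou_component f Omega -> forward_invariant f Omega ->
  let W := fun s => exists t, Omega t /\ phi t = s in
  [/\ fatou_component f W, forward_invariant f W & same_type f Omega W].
Proof.
move=> _ _ f_phi compO invO W.
have -> : W = Omega \o phi.
  apply/funext => s; apply/propext; split=> [[t [Ot <-]]|Os]; first by rewrite /= phiK.
  by exists (phi s); rewrite phiK.
split.
- exact (fatou_component_comp (@phiK R) (@chordal_phi R) f_phi compO).
- exact (forward_invariant_comp (@phiK R) f_phi invO).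
split; apply: iff_comp_involutive (@phiK R) _ => O.
- exact: attracting_comp_phi.
- exact: superattracting_comp_phi.
- exact: parabolic_comp_phi.
- exact: siegel_disk_phi.
- exact: herman_ring_phi.
Qed.
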